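(* Let $\equiv$ be the equivalence relation on $\mathfrak S_n$ generated by the pattern replacements $321\equiv231$ and $312\equiv132$: i.e., for letters $a<b<c$ occupying three consecutive positions of a permutation, one may replace $cba$ by $bca$ (and conversely) and $cab$ by $acb$ (and conversely). Then for $\sigma,\tau\in\mathfrak S_n$, one has $\mathrm{SC}(\sigma^{-1})=\mathrm{SC}(\tau^{-1})$ if and only if $\sigma\equiv\tau$.
   Context: Permutations are words $\sigma_1\cdots\sigma_n$. A word $a_1\cdots a_m$ is initially dominated if $a_1>a_j$ for all $j\ge2$; every permutation factors uniquely as $\sigma=u_1\cdots u_r$ into initially dominated words with increasing first letters, and $\mathrm{SC}(\sigma)=(|u_1|,\ldots,|u_r|)$ is its saillance composition. Pattern replacements act on letters in adjacent positions. *)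

From Stdlib Require Import Relation_Operators.
From mathcomp Require Import all_boot all_order all_fingroup.
Set Implicit Arguments. Unset Strict Implicit. Unset Printing Implicit Defensive.

Definition perm_word n (s : {perm 'I_n}) : seq nat :=
  [seq nat_of_ord (s i) | i <- enum 'I_n].

Definition init_dominated (u : seq nat) : bool :=
  if u is a :: t then all (fun x => x < a) t else false.

Definition saillance_factorization (w : seq nat) (us : seq (seq nat)) : Prop :=
  flatten us = w /\ all init_dominated us /\ sorted ltn [seq head 0 u | u <- us].

(* SC(w) = c : c is the composition of sizes of the (unique) factorization *)
Definition SC_is (w : seq nat) (c : seq nat) : Prop :=
  exists us, saillance_factorization w us /\ shape us = c.

Inductive repl_step : seq nat -> seq nat -> Prop :=
| step321 p s a b c : a < b -> b < c ->
    repl_step (p ++ [:: c; b; a] ++ s) (p ++ [:: b; c; a] ++ s)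
| step312 p s a b c : a < b -> b < c ->
    repl_step (p ++ [:: c; a; b] ++ s) (p ++ [:: a; c; b] ++ s).

Definition pequiv (w w' : seq nat) : Prop :=
  clos_refl_sym_trans (seq nat) repl_step w w'.

Definition perm_equiv n (s t : {perm 'I_n}) : Prop :=
  pequiv (perm_word s) (perm_word t).

From Stdlib Require Import Relation_Operators.
From mathcomp Require Import all_boot all_order all_fingroup.
From mathcomp Require Import zify.
Set Implicit Arguments. Unset Strict Implicit. Unset Printing Implicit Defensive.

(* A letter of a word is a right-to-left minimum if it is smaller than every
   letter after it.  Both replacements preserve the right-to-left minima, and
   two words on the same distinct letters with the same right-to-left minima
   are equivalent: the largest letter m is either last, and then a
   right-to-left minimum, or it can be moved to the front by replacements
   without changing the minima; either way induction on the length applies.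
   On the other side, the saillance factorization of a word opens a new factor
   exactly at each left-to-right maximum, so SC(w) encodes the positions of the
   left-to-right maxima of w.  Finally, i is such a position in sigma^-1 iff all
   letters below i precede i in sigma, i.e. iff i is a right-to-left minimum
   of sigma. *)

Lemma bigmax_seq_mem (w : seq nat) : w != [::] -> \max_(x <- w) x \in w.
Proof.
elim: w => //= x [|y r] IH _; first by rewrite big_seq1 mem_seq1.
rewrite big_cons inE /maxn; case: ltnP => _; last by rewrite eqxx.
by rewrite IH ?orbT.
Qed.

Lemma mem_drop_uniq (T : eqType) (s : seq T) x i : uniq s ->
  (x \in drop i s) = (x \in s) && (i <= index x s).
Proof.
move=> us; have [xs|] := boolP (x \in s); last by apply: contraNF; apply: mem_drop.
rewrite leqNgt -in_take //=.
move: us xs; rewrite -{1 2}(cat_take_drop i s) cat_uniq mem_cat => /and3P [_ td _].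
have [xt _ | _ /= -> //] := boolP (x \in take i s).
by apply/negbTE/negP => /(hasPn td x); rewrite xt.
Qed.

Lemma nseq_false_cat_inj i j (l l' : seq bool) : head true l -> head true l' ->
  nseq i false ++ l = nseq j false ++ l' -> i = j /\ l = l'.
Proof.
elim: i j => [|i IH] [|j] //= hl hl'.
- by move=> eq_l; move: hl; rewrite eq_l.
- by move=> eq_l; move: hl'; rewrite -eq_l.
- by case=> /(IH _ hl hl') [-> ->].
Qed.

Lemma inj_forall_ltn_contra n (f : 'I_n -> 'I_n) (i : 'I_n) : injective f ->
  [forall j : 'I_n, (j < i) ==> (f j < f i)] =
  [forall j : 'I_n, (f i < f j) ==> (i < j)].
Proof.
move=> f_inj; apply/forallP/forallP => h j; apply/implyP; rewrite !ltnNge; apply: contra.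
- have [/val_inj -> _ // | ne] := eqVneq (val j) (val i).
  by rewrite leq_eqVlt (negPf ne) => /(implyP (h j))/ltnW.
- have [/val_inj/f_inj -> _ // | ne] := eqVneq (val (f i)) (val (f j)).
  by rewrite leq_eqVlt (negPf ne) => /(implyP (h j))/ltnW.
Qed.

(** * Replacement equivalence and right-to-left minima *)

Lemma pequiv_trans v u w : pequiv u v -> pequiv v w -> pequiv u w.
Proof. exact: rst_trans. Qed.

Lemma pequiv_sym u w : pequiv u w -> pequiv w u.
Proof. exact: rst_sym. Qed.

Lemma pequiv_cat l r u u' : pequiv u u' -> pequiv (l ++ u ++ r) (l ++ u' ++ r).
Proof.
elim=> [x y step | x | x y _ IH | x y z _ IH1 _ IH2].
- have reassoc p s t : l ++ (p ++ t ++ s) ++ r = (l ++ p) ++ t ++ (s ++ r).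
    by rewrite !catA.
  apply: rst_step; case: step => p s a b c ab bc; rewrite !reassoc.
  + exact: step321.
  + exact: step312.
- exact: rst_refl.
- exact: pequiv_sym.
- exact: pequiv_trans IH2.
Qed.

Lemma pequiv_cons x u u' : pequiv u u' -> pequiv (x :: u) (x :: u').
Proof. by move/(pequiv_cat [:: x] [::]); rewrite !cats0. Qed.

Lemma pequiv_rcons x u u' : pequiv u u' -> pequiv (rcons u x) (rcons u' x).
Proof. by move=> h; rewrite -!cats1; exact: (pequiv_cat [::] [:: x] h). Qed.

Fixpoint rlmin (w : seq nat) : seq nat :=
  if w is x :: r then if all (ltn x) r then x :: rlmin r else rlmin r else [::].

Lemma rlmin_subseq w : subseq (rlmin w) w.
Proof.
elim: w => //= x r IH; case: ifP => _; first by rewrite eqxx.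
exact: subseq_trans IH (subseq_cons r x).
Qed.

Lemma mem_rlmin w x : uniq w ->
  (x \in rlmin w) = (x \in w) && all (ltn x) (drop (index x w).+1 w).
Proof.
elim: w => //= y r IH /andP [yr ur]; rewrite inE.
have [->|xy] /= := eqVneq x y.
  rewrite drop0; case: ifP => _; first by rewrite inE eqxx.
  by apply: contraNF yr; apply: (mem_subseq (rlmin_subseq r)).
by rewrite -IH //; case: ifP; rewrite ?inE ?(negPf xy).
Qed.

Lemma rlmin_sorted w : sorted ltn (rlmin w).
Proof.
elim: w => //= x r IH; case: ifP => // xr; rewrite /= path_min_sorted //.
by apply/allP=> y /(mem_subseq (rlmin_subseq r)); apply: (allP xr).
Qed.

Lemma rlmin_cat p r :
  rlmin (p ++ r) = [seq x <- rlmin p | all (ltn x) r] ++ rlmin r.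
Proof.
elim: p => //= x p IH; rewrite all_cat.
by case: (all _ p); rewrite IH //=; case: (all _ r).
Qed.

Lemma repl_step_rlmin w w' : repl_step w w' -> rlmin w = rlmin w'.
Proof.
case=> p s a b c ab bc; rewrite !rlmin_cat;
  (congr (_ ++ _); [by apply: eq_filter => x; rewrite /= andbCA|]);
  have [cb ca ba] : [/\ (c < b) = false, (c < a) = false & (b < a) = false]
    by split; lia.
all: by rewrite /= ?cb ?ca ?ba ?ab ?(ltn_trans ab bc) ?andbF.
Qed.

Lemma pequiv_rlmin w w' : pequiv w w' -> rlmin w = rlmin w'.
Proof.
by elim=> [x y /repl_step_rlmin | x | x y _ -> | x y z _ -> _ ->].
Qed.

Lemma pequiv_swap_max m x y r : x < m -> y < m -> x != y ->
  pequiv (x :: m :: y :: r) (m :: x :: y :: r).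
Proof.
move=> xm ym /negPf xy; apply/rst_sym/rst_step.
case: ltngtP xy => // [xy | yx] _.
- exact: (@step312 [::] r x y m).
- exact: (@step321 [::] r y x m).
Qed.

Lemma pequiv_max_to_front m p q : uniq (p ++ q) -> all (ltn^~ m) (p ++ q) ->
  q != [::] -> pequiv (p ++ m :: q) (m :: p ++ q).
Proof.
move=> + + q0; elim: p => [|x p IH] /=; first by move=> *; apply: rst_refl.
case/andP=> xpq upq /andP [xm pqm].
apply: pequiv_trans (pequiv_cons x (IH upq pqm)) _.
case E: (p ++ q) xpq pqm => [|y r].
  by case: p q q0 E {IH upq} => [|? ?] [|? ?].
rewrite inE negb_or => /andP [xy _] /andP [ym _].
exact: pequiv_swap_max.
Qed.

Lemma rlmin_rcons_max m p :
  all (ltn^~ m) p -> rlmin (rcons p m) = rcons (rlmin p) m.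
Proof.
move=> pm; rewrite -!cats1 rlmin_cat; congr (_ ++ _).
apply/all_filterP/allP=> x /(mem_subseq (rlmin_subseq p)) /(allP pm).
by rewrite /= andbT.
Qed.

Lemma rlmin_insert_max m p q : all (ltn^~ m) (p ++ q) -> q != [::] ->
  rlmin (p ++ m :: q) = rlmin (p ++ q).
Proof.
case: q => // y q; rewrite all_cat /= => /and3P [pm ym _] _.
rewrite !rlmin_cat /= ltnNge (ltnW ym) /=; congr (_ ++ _).
by apply: eq_in_filter => x /(mem_subseq (rlmin_subseq p)) /(allP pm) /= ->.
Qed.

Lemma peel_max m w : uniq w -> m \in w -> all (leq^~ m) w ->
  exists2 p, perm_eq w (m :: p) &
    if m \in rlmin w then w = rcons p m /\ rlmin w = rcons (rlmin p) m
    else pequiv w (m :: p) /\ rlmin w = rlmin p.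
Proof.
move=> uw wm; case/splitPr: wm uw => p q uw wm.
have pw : perm_eq (p ++ m :: q) (m :: p ++ q) by rewrite -cat1s perm_catCA.
move: uw wm; rewrite (perm_uniq pw) (perm_all _ pw) /=.
move=> /andP [mpq upq] /andP [_ pqm].
have {}pqm : all (ltn^~ m) (p ++ q).
  apply/allP=> x xpq; rewrite /= ltn_neqAle (allP pqm) // andbT.
  by apply: contraNneq mpq => <-.
exists (p ++ q) => //.
case: q => [|y q] in pw upq pqm mpq *.
- by rewrite cats0 in pqm *; rewrite cats1 rlmin_rcons_max // mem_rcons inE eqxx.
- rewrite rlmin_insert_max // ifN; first by split; [exact: pequiv_max_to_front|].
  by apply: contra mpq; apply: (mem_subseq (rlmin_subseq _)).
Qed.

Lemma eq_rlmin_pequiv w w' :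
  uniq w -> perm_eq w w' -> rlmin w = rlmin w' -> pequiv w w'.
Proof.
have [n] := ubnP (size w); elim: n w w' => // n IH w w' wn uw ww' eq_rlmin.
have [w0|w0] := eqVneq w [::].
  by move: ww'; rewrite w0 perm_sym => /perm_nilP ->; apply: rst_refl.
set m := \max_(x <- w) x.
have wm : all (leq^~ m) w by apply/allP=> x xw; apply: leq_bigmax_seq.
have uw' : uniq w' by rewrite -(perm_uniq ww').
have w'm : m \in w' by rewrite -(perm_mem ww') bigmax_seq_mem.
have w'm_max : all (leq^~ m) w' by rewrite -(perm_all _ ww').
have [p wp peel] := peel_max uw (bigmax_seq_mem w0) wm.
have [p' wp' peel'] := peel_max uw' w'm w'm_max.
have pp' : perm_eq p p'.
  by rewrite -(perm_cons m) (perm_trans _ (perm_trans ww' wp')) // perm_sym.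
have up : uniq p by have := uw; rewrite (perm_uniq wp) => /andP [].
have pn : size p < n by move: wn; rewrite (perm_size wp).
rewrite -eq_rlmin in peel'; case: ifP peel peel' => _ [ew erl] [ew' erl'].
- rewrite ew ew'; apply: pequiv_rcons; apply: IH => //.
  by case: (rcons_inj (etrans (esym erl) erl')).
- apply: pequiv_trans ew (pequiv_trans _ (pequiv_sym ew')); apply: pequiv_cons.
  by apply: IH; rewrite // -erl -erl'.
Qed.

Lemma pequiv_iff_rlmin w w' : uniq w -> perm_eq w w' ->
  pequiv w w' <-> rlmin w = rlmin w'.
Proof. by move=> uw ww'; split; [apply: pequiv_rlmin | apply: eq_rlmin_pequiv]. Qed.

(** * Saillance compositions and left-to-right maxima *)

(* [b] is one more than the largest letter read so far. *)
Fixpoint lrmax_mask (b : nat) (w : seq nat) : seq bool :=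
  if w is a :: t then (b <= a) :: lrmax_mask (maxn b a.+1) t else [::].

Definition composition_mask (c : seq nat) : seq bool :=
  flatten [seq true :: nseq k.-1 false | k <- c].

Lemma size_lrmax_mask b w : size (lrmax_mask b w) = size w.
Proof. by elim: w b => //= a t IH b; rewrite IH. Qed.

Lemma nth_lrmax_mask b w i : i < size w ->
  nth false (lrmax_mask b w) i = (b <= nth 0 w i) && all (ltn^~ (nth 0 w i)) (take i w).
Proof.
elim: w b i => // a t IH b [|i] /= lt_i; first by rewrite andbT.
by rewrite IH // geq_max andbA.
Qed.

Lemma lrmax_mask_dominated a t r : all (ltn^~ a) t ->
  lrmax_mask a.+1 (t ++ r) = nseq (size t) false ++ lrmax_mask a.+1 r.
Proof.
elim: t => //= x t IH /andP [xa ta].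
by rewrite ltnNge (ltnW xa) /= (maxn_idPl (ltnW xa : x.+1 <= a.+1)) IH.
Qed.

Lemma lrmax_mask_flatten b us : all init_dominated us ->
  sorted ltn [seq head 0 u | u <- us] -> b <= head b [seq head 0 u | u <- us] ->
  lrmax_mask b (flatten us) = composition_mask (shape us).
Proof.
elim: us b => //= [[|a t]] // us IH b /andP [ta dom_us] sorted_us /= ba.
rewrite ba (maxn_idPr (leqW ba)) lrmax_mask_dominated //; congr (_ :: _ ++ _).
apply: IH (path_sorted sorted_us) _ => //.
by case: us sorted_us {dom_us} => //= u us /andP [].
Qed.

Lemma lrmax_mask_saillance w us :
  saillance_factorization w us -> lrmax_mask 0 w = composition_mask (shape us).
Proof. by case=> <- [dom_us sorted_us]; apply: lrmax_mask_flatten. Qed.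

Lemma saillance_factorization_exists w :
  uniq w -> exists us, saillance_factorization w us.
Proof.
have [n] := ubnP (size w); elim: n w => // n IH [|a t] /= tn; first by exists [::].
case/andP=> a_t ut; set i := find (leq a) t.
have dn : size (drop i t) < n.
  by rewrite size_drop; apply: leq_ltn_trans (leq_subr i _) (tn : size t < n).
have [us [flat_us [dom_us sorted_us]]] := IH _ dn (drop_uniq i ut).
exists ((a :: take i t) :: us); split; [|split].
- by rewrite /= flat_us cat_take_drop.
- rewrite /= dom_us andbT (eq_all (fun x => ltnNge x a)) all_predC.
  by apply/negP => /find_ltn; rewrite ltnn.
- case: us flat_us sorted_us dom_us => //= u us flat_us -> /andP [du _].
  case: u du flat_us => // y u _ flat_us; rewrite andbT.
  have it : i < size t.
    by rewrite ltnNge; apply/negP => /drop_oversize; rewrite -flat_us.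
  have -> : y = nth 0 t i by move: flat_us; rewrite (drop_nth 0 it) => [[]].
  have ai : a <= nth 0 t i by apply: nth_find; rewrite has_find.
  by rewrite ltn_neqAle ai andbT; apply: contraNneq a_t => ->; apply: mem_nth.
Qed.

Lemma composition_mask_inj c c' : all (ltn 0) c -> all (ltn 0) c' ->
  composition_mask c = composition_mask c' -> c = c'.
Proof.
elim: c c' => [|k c IH] [|k' c'] //= /andP [k0 c0] /andP [k0' c0'] [].
case/nseq_false_cat_inj; [by case: (c) | by case: (c') | move=> eq_k /(IH _ c0 c0') ->].
by rewrite -(prednK k0) -(prednK k0') eq_k.
Qed.

Lemma saillance_shape_gt0 w us :
  saillance_factorization w us -> all (ltn 0) (shape us).
Proof. by case=> _ [+ _]; elim: us => [|[|a t] us IH] //= /andP [_ /IH]. Qed.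

Lemma SC_agree_lrmax_mask w w' : uniq w -> uniq w' ->
  (exists c, SC_is w c /\ SC_is w' c) <-> lrmax_mask 0 w = lrmax_mask 0 w'.
Proof.
move=> uw uw'; split.
  by case=> c [[us [/lrmax_mask_saillance -> <-]] [us' [/lrmax_mask_saillance -> <-]]].
have [us fus] := saillance_factorization_exists uw.
have [us' fus'] := saillance_factorization_exists uw'.
rewrite (lrmax_mask_saillance fus) (lrmax_mask_saillance fus').
move/(composition_mask_inj (saillance_shape_gt0 fus) (saillance_shape_gt0 fus')) => eq_c.
by exists (shape us); split; [exists us | exists us'; rewrite eq_c].
Qed.

(** * Words of permutations *)

Section PermWord.
Variables (n : nat) (s : {perm 'I_n}).

Lemma perm_word_uniq : uniq (perm_word s).
Proof. by rewrite map_inj_uniq ?enum_uniq // => i j /val_inj/perm_inj. Qed.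

Lemma size_perm_word : size (perm_word s) = n.
Proof. by rewrite size_map size_enum_ord. Qed.

Lemma mem_perm_word x : (x \in perm_word s) = (x < n).
Proof.
apply/mapP/idP => [[i _ ->] // | xn].
by exists (s^-1 (Ordinal xn))%g; rewrite ?mem_enum ?permKV.
Qed.

Lemma nth_perm_word (i : 'I_n) : nth 0 (perm_word s) i = s i.
Proof. by rewrite (nth_map i) ?size_enum_ord // nth_ord_enum. Qed.

Lemma index_perm_word (i : 'I_n) : index (val i) (perm_word s) = (s^-1)%g i.
Proof.
have f_inj : injective (fun j => nat_of_ord (s j)) by move=> j k /val_inj/perm_inj.
by rewrite -{1}(permKV s i) (index_map f_inj) index_enum_ord.
Qed.

Lemma all_take_perm_word (P : pred nat) i :
  all P (take i (perm_word s)) = [forall k : 'I_n, (k < i) ==> P (s k)].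
Proof.
rewrite -map_take all_map; apply/allP/forallP => [h k | h k].
  by apply/implyP => ki; apply: h; rewrite in_take ?mem_enum ?index_enum_ord.
by rewrite in_take ?mem_enum // index_enum_ord; apply/implyP: (h k).
Qed.

Lemma all_drop_perm_word (P : pred nat) i :
  all P (drop i (perm_word s)) = [forall j : 'I_n, (i <= (s^-1)%g j) ==> P j].
Proof.
apply/allP/forallP => [h j | h x].
  apply/implyP => ij; apply: h.
  by rewrite mem_drop_uniq ?perm_word_uniq // mem_perm_word ltn_ord index_perm_word.
rewrite mem_drop_uniq ?perm_word_uniq // mem_perm_word => /andP [xn].
by rewrite -[x]/(val (Ordinal xn)) index_perm_word; apply/implyP: (h (Ordinal xn)).
Qed.

End PermWord.

Lemma perm_word_perm_eq n (s t : {perm 'I_n}) : perm_eq (perm_word s) (perm_word t).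
Proof.
by apply: uniq_perm; rewrite ?perm_word_uniq // => x; rewrite !mem_perm_word.
Qed.

Lemma lrmax_mask_perm_word_inv n (s : {perm 'I_n}) (i : 'I_n) :
  nth false (lrmax_mask 0 (perm_word s^-1)) i = (val i \in rlmin (perm_word s)).
Proof.
rewrite nth_lrmax_mask ?size_perm_word // nth_perm_word all_take_perm_word.
rewrite mem_rlmin ?perm_word_uniq // mem_perm_word ltn_ord index_perm_word.
by rewrite all_drop_perm_word inj_forall_ltn_contra //; apply: perm_inj.
Qed.

Lemma eq_lrmax_mask_perm_word_inv n (s t : {perm 'I_n}) :
  lrmax_mask 0 (perm_word s^-1) = lrmax_mask 0 (perm_word t^-1) <->
  rlmin (perm_word s) = rlmin (perm_word t).
Proof.
split=> [eq_mask | eq_rlmin].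
  apply: (irr_sorted_eq ltn_trans ltnn); rewrite ?rlmin_sorted // => y.
  have [yn | ny] := ltnP y n.
    by rewrite -[y]/(val (Ordinal yn)) -!lrmax_mask_perm_word_inv eq_mask.
  have notin (u : {perm 'I_n}) : (y \in rlmin (perm_word u)) = false.
    apply: contraTF ny => /(mem_subseq (rlmin_subseq _)).
    by rewrite mem_perm_word -ltnNge.
  by rewrite !notin.
apply: (@eq_from_nth _ false); rewrite ?size_lrmax_mask ?size_perm_word //.
by move=> i lt_in; rewrite -[i]/(val (Ordinal lt_in)) !lrmax_mask_perm_word_inv eq_rlmin.
Qed.

Theorem mainTheorem4 (n : nat) (s t : {perm 'I_n}) :
  (exists c, SC_is (perm_word s^-1) c /\ SC_is (perm_word t^-1) c)
  <-> perm_equiv s t.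
Proof.
rewrite SC_agree_lrmax_mask ?perm_word_uniq // eq_lrmax_mask_perm_word_inv.
by rewrite /perm_equiv pequiv_iff_rlmin ?perm_word_uniq ?perm_word_perm_eq.
Qed.
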